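(* Let $M$ be a positive integer, $q\in(q_{KL},M+1]$, and let $x_1\dots x_N$ be a word occurring in some sequence of $\mathbf V_q$. Let $(p_n)\subset(1,M+1]$ be an increasing sequence converging to $q$ such that $\alpha(p_n)\in\mathbf V$ for every $n\ge1$. Then $x_1\dots x_N$ occurs in some sequence of $\mathbf V_{p_n}$ for all sufficiently large $n$.
   Context: Fix a positive integer $M$; all sequences have digits in $\{0,1,\dots,M\}$. For $q\in(1,M+1]$, $\alpha(q)$ is the quasi-greedy $q$-expansion of $1$ (lexicographically largest sequence $(a_i)$ not ending in $0^\infty$ with $\sum a_iq^{-i}=1$). Sequences are compared lexicographically; $\overline{(x_i)}=(M-x_1)(M-x_2)\dots$; $\sigma$ is the left shift. $\mathbf V_q$ is the set of $(x_i)$ with $\overline{\alpha(q)}\preccurlyeq\sigma^n((x_i))\preccurlyeq\alpha(q)$ for all $n\ge0$. $\mathbf V$ is the set of sequences $(a_i)$ with $\overline{(a_i)}\preccurlyeq\sigma^n((a_i))\preccurlyeq(a_i)$ for all $n\ge0$. $(\tau_i)_{i\ge0}$ is the Thue–Morse sequence; $q_{KL}$ is the base with $\alpha(q_{KL})=\lambda_1\lambda_2\dots$, $\lambda_i=k+\tau_i-\tau_{i-1}$ if $M=2k$, $\lambda_i=k+\tau_i$ if $M=2k+1$. *)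

From Stdlib Require Import Reals Lra Lia Arith List ClassicalEpsilon.
Open Scope R_scope.

(* Sequences (x_1 x_2 ...) are functions nat -> nat, 0-based: x i = x_{i+1}. *)
Definition digit_seq (M : nat) (x : nat -> nat) : Prop := forall i, (x i <= M)%nat.

Definition expansion_of_one (q : R) (x : nat -> nat) : Prop :=
  infinite_sum (fun i => INR (x i) / q ^ (S i)) 1.

Definition not_ending_zero (x : nat -> nat) : Prop :=
  forall n, exists m, (n <= m)%nat /\ x m <> 0%nat.

Definition lex_lt (x y : nat -> nat) : Prop :=
  exists n, (forall i, (i < n)%nat -> x i = y i) /\ (x n < y n)%nat.

Definition lex_le (x y : nat -> nat) : Prop :=
  (forall i, x i = y i) \/ lex_lt x y.

Definition refl (M : nat) (x : nat -> nat) : nat -> nat := fun i => (M - x i)%nat.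

Definition shift (n : nat) (x : nat -> nat) : nat -> nat := fun i => x (n + i)%nat.

Definition is_quasi_greedy (M : nat) (q : R) (a : nat -> nat) : Prop :=
  digit_seq M a /\ not_ending_zero a /\ expansion_of_one q a /\
  forall b, digit_seq M b -> not_ending_zero b -> expansion_of_one q b -> lex_le b a.

Definition alpha (M : nat) (q : R) : nat -> nat :=
  epsilon (inhabits (fun _ => 0%nat)) (is_quasi_greedy M q).

Definition Vq (M : nat) (q : R) (x : nat -> nat) : Prop :=
  digit_seq M x /\
  forall n, lex_le (refl M (alpha M q)) (shift n x) /\ lex_le (shift n x) (alpha M q).

Definition Vset (M : nat) (a : nat -> nat) : Prop :=
  digit_seq M a /\
  forall n, lex_le (refl M a) (shift n a) /\ lex_le (shift n a) a.

(* Thue-Morse: tau n = parity of number of 1's in the binary expansion of n *)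
Fixpoint tau_aux (fuel n : nat) : nat :=
  match fuel with
  | O => O
  | S f => match n with
           | O => O
           | _ => ((n mod 2) + tau_aux f (n / 2)) mod 2
           end
  end.
Definition tau (n : nat) : nat := tau_aux n n.

(* lambda_{i+1} (0-based): M = 2k: k + tau_{i+1} - tau_i ; M = 2k+1: k + tau_{i+1} *)
Definition lambdaKL (M : nat) (i : nat) : nat :=
  if Nat.even M then (M / 2 + tau (S i) - tau i)%nat else (M / 2 + tau (S i))%nat.

Definition occurs_in (w : list nat) (y : nat -> nat) : Prop :=
  exists k, forall i, (i < length w)%nat -> y (k + i)%nat = nth i w 0%nat.

From Stdlib Require Import Reals Lra Lia Arith List ClassicalEpsilon.
From Stdlib Require Import Classical FunctionalExtensionality Wf_nat.
Open Scope R_scope.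

(* The quasi-greedy expansion satisfies
   1 - sum_(i<=k) alpha_i(q) q^-i <= q^-k, so a digit sequence lying
   lexicographically above alpha(q) at position k already has partial sum >= 1
   after k digits.  Comparing alpha(p) with alpha(q) digit by digit, this shows
   that alpha(p) and alpha(q) share their first N digits as soon as p <= q and
   the N-th partial sum of alpha(q) in base p is < 1; by continuity in the base
   this holds for p = p_n with n large.
   Then surgery: if y in V_q contains w, cut w at the first position j from
   which the rest of w is a prefix of alpha(q) or of its reflection, and
   continue with b = alpha(p_n) or its reflection.  Since b is in V, the shifts
   from position j on are admissible; the earlier ones are strictly between the
   bounds because their lexicographic mismatch with alpha(q) occurs inside w,
   where alpha(q) and b coincide. *)

Definition agree_below (n : nat) (x y : nat -> nat) : Prop :=
  forall i, (i < n)%nat -> x i = y i.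

Lemma exists_least (P : nat -> Prop) :
  (exists n, P n) -> exists m, P m /\ forall j, P j -> (m <= j)%nat.
Proof.
  intros HP.
  destruct (dec_inh_nat_subset_has_unique_least_element P (fun n => classic (P n)) HP)
    as [m [Hm _]].
  now exists m.
Qed.

Lemma lex_le_or_gt (x y : nat -> nat) : lex_le x y \/ lex_lt y x.
Proof.
  destruct (classic (forall i, x i = y i)) as [Heq | Hneq]; [now left; left|].
  apply not_all_ex_not in Hneq.
  destruct (exists_least (fun i => x i <> y i) Hneq) as [m [Hm Hleast]].
  assert (Hbelow : agree_below m x y).
  { intros i Hi. apply NNPP. intros Hxy. specialize (Hleast i Hxy). lia. }
  destruct (proj1 (Nat.lt_gt_cases (x m) (y m)) Hm) as [Hlt | Hgt].
  - left; right. now exists m.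
  - right. exists m. split; [intros i Hi; symmetry; auto | exact Hgt].
Qed.

Lemma lex_le_antisym x y : lex_le x y -> lex_le y x -> forall i, x i = y i.
Proof.
  intros [Hxy | [n [Hn Hltn]]] Hyx; [exact Hxy|].
  destruct Hyx as [Hyx | [m [Hm Hltm]]]; [rewrite Hyx in Hltn; lia|].
  exfalso. destruct (Nat.lt_trichotomy n m) as [Hnm | [-> | Hmn]].
  - rewrite Hm in Hltn by exact Hnm. lia.
  - lia.
  - rewrite Hn in Hltm by exact Hmn. lia.
Qed.

Fixpoint pval (q : R) (x : nat -> nat) (n : nat) : R :=
  match n with O => 0 | S k => pval q x k + INR (x k) / q ^ S k end.

Lemma expansion_of_one_pval q x : expansion_of_one q x <-> Un_cv (pval q x) 1.
Proof.
  assert (Hsum : forall n, sum_f_R0 (fun i => INR (x i) / q ^ S i) n = pval q x (S n)).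
  { induction n as [|n IH]; simpl in *; [lra | rewrite IH; reflexivity]. }
  split; intros H eps Heps; destruct (H eps Heps) as [N HN].
  - exists (S N). intros [|n] Hn; [lia|]. rewrite <- Hsum. apply HN. lia.
  - exists N. intros n Hn. rewrite Hsum. apply HN. lia.
Qed.

Lemma pval_growing q x : 0 < q -> Un_growing (pval q x).
Proof.
  intros Hq n. cbn [pval]. pose proof (pow_lt q (S n) Hq).
  assert (0 <= INR (x n) / q ^ S n)
    by (apply Rmult_le_pos; [apply pos_INR | left; apply Rinv_0_lt_compat; lra]).
  lra.
Qed.

Lemma pval_le_mono q x m n : 0 < q -> (m <= n)%nat -> pval q x m <= pval q x n.
Proof. intros Hq Hmn. apply Rge_le, growing_prop; [apply pval_growing|]; auto. Qed.

Lemma pval_ext q x y n : agree_below n x y -> pval q x n = pval q y n.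
Proof.
  induction n as [|n IH]; intros Hxy; simpl; [reflexivity|].
  rewrite IH, Hxy; [reflexivity | lia |].
  intros i Hi. apply Hxy. lia.
Qed.

Lemma pval_base_antimono p q x n : 0 < p <= q -> pval q x n <= pval p x n.
Proof.
  intros Hpq. induction n as [|n IH]; cbn [pval]; [lra|].
  apply Rplus_le_compat; [exact IH|]. unfold Rdiv.
  apply Rmult_le_compat_l; [apply pos_INR|].
  apply Rinv_le_contravar; [apply pow_lt; lra|]. apply pow_incr. lra.
Qed.

Lemma pval_continuous x n q : 0 < q -> continuity_pt (fun t => pval t x n) q.
Proof.
  intros Hq. induction n as [|n IH]; simpl.
  - apply continuity_pt_const. now intros a b.
  - apply (continuity_pt_plus (fun t => pval t x n) (fun t => INR (x n) / (t * t ^ n)));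
      [exact IH|].
    apply (continuity_pt_div (fun _ => INR (x n)) (fun t => t * t ^ n)).
    + apply continuity_pt_const. now intros a b.
    + apply (derivable_continuous_pt (fun t => t ^ S n)), derivable_pt_pow.
    + pose proof (pow_lt q n Hq). nra.
Qed.

Lemma pval_lt_one q x n :
  0 < q -> not_ending_zero x -> expansion_of_one q x -> pval q x n < 1.
Proof.
  intros Hq Hnz Hx. apply expansion_of_one_pval in Hx.
  destruct (Hnz n) as [m [Hnm Hxm]].
  pose proof (growing_ineq _ _ (pval_growing q x Hq) Hx (S m)) as Hle.
  pose proof (pval_le_mono q x n m Hq Hnm). cbn [pval] in Hle.
  assert (0 < INR (x m) / q ^ S m)
    by (apply Rdiv_lt_0_compat; [apply lt_0_INR; lia | apply pow_lt; lra]).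
  lra.
Qed.

Lemma one_le_pval_of_lex_above r u x m :
  0 < r -> 1 - pval r u (S m) <= / r ^ S m -> agree_below m x u -> (u m < x m)%nat ->
  1 <= pval r x (S m).
Proof.
  intros Hr Htail Hagree Hlt. cbn [pval] in *.
  rewrite (pval_ext r x u m Hagree).
  assert (Hd : INR (u m) + 1 <= INR (x m)) by (rewrite <- S_INR; apply le_INR; lia).
  pose proof (pow_lt r (S m) Hr).
  assert (Hgap : INR (x m) / r ^ S m - INR (u m) / r ^ S m - / r ^ S m
                 = (INR (x m) - INR (u m) - 1) / r ^ S m) by (field; lra).
  assert (0 <= (INR (x m) - INR (u m) - 1) / r ^ S m)
    by (unfold Rdiv; apply Rmult_le_pos; [lra | left; apply Rinv_0_lt_compat; lra]).
  lra.
Qed.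

Fixpoint max_below (y : R) (k : nat) : nat :=
  match k with
  | O => O
  | S k' => if Rlt_dec (INR k) y then k else max_below y k'
  end.

Lemma max_below_le y k : (max_below y k <= k)%nat.
Proof. induction k as [|k IH]; simpl; [lia|]. destruct (Rlt_dec _ _); lia. Qed.

Lemma max_below_lt y k : 0 < y -> INR (max_below y k) < y.
Proof. intros Hy. induction k as [|k IH]; simpl; [lra|]. now destruct (Rlt_dec _ _). Qed.

Lemma max_below_maximal y k : (max_below y k < k)%nat -> y <= INR (max_below y k) + 1.
Proof.
  induction k as [|k IH]; cbn [max_below]; intros Hlt; [lia|].
  destruct (Rlt_dec (INR (S k)) y) as [_ | Hge]; [lia|].
  destruct (Nat.eq_dec (max_below y k) k) as [-> | Hne].
  - rewrite <- S_INR. lra.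
  - apply IH. pose proof (max_below_le y k). lia.
Qed.

Lemma inv_pow_eventually_lt q eps :
  1 < q -> 0 < eps -> exists N, forall n, (N <= n)%nat -> / q ^ n < eps.
Proof.
  intros Hq Heps.
  assert (Hinv : Rabs (/ q) < 1).
  { rewrite Rabs_right by (left; apply Rinv_0_lt_compat; lra).
    rewrite <- Rinv_1. apply Rinv_lt_contravar; lra. }
  destruct (pow_lt_1_zero (/ q) Hinv eps Heps) as [N HN].
  exists N. intros n Hn. specialize (HN n Hn).
  rewrite pow_inv, Rabs_right in HN by (left; apply Rinv_0_lt_compat, pow_lt; lra).
  exact HN.
Qed.

Section Greedy.

Variables (M : nat) (q : R).
Hypothesis Hq : 1 < q <= INR M + 1.

(* Quasi-greedy algorithm: each digit is the largest one that keeps the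
   remainder strictly positive. *)
Fixpoint greedy_rem (k : nat) : R :=
  match k with
  | O => 1
  | S k' => q * greedy_rem k' - INR (max_below (q * greedy_rem k') M)
  end.

Definition greedy_digit (k : nat) : nat := max_below (q * greedy_rem k) M.

Lemma greedy_rem_S k : greedy_rem (S k) = q * greedy_rem k - INR (greedy_digit k).
Proof. reflexivity. Qed.

Lemma greedy_rem_pos k : 0 < greedy_rem k.
Proof.
  induction k as [|k IH]; [simpl; lra|]. rewrite greedy_rem_S.
  pose proof (max_below_lt (q * greedy_rem k) M ltac:(nra)). unfold greedy_digit. lra.
Qed.

Lemma greedy_rem_le_1 k : greedy_rem k <= 1.
Proof.
  induction k as [|k IH]; [simpl; lra|]. rewrite greedy_rem_S. unfold greedy_digit.
  destruct (Nat.lt_ge_cases (max_below (q * greedy_rem k) M) M) as [Hlt | Hge].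
  - apply max_below_maximal in Hlt. lra.
  - pose proof (max_below_le (q * greedy_rem k) M).
    replace (max_below (q * greedy_rem k) M) with M by lia.
    pose proof (greedy_rem_pos k). nra.
Qed.

Lemma greedy_remainder k : 1 - pval q greedy_digit k = greedy_rem k / q ^ k.
Proof.
  induction k as [|k IH]; [simpl; field|].
  cbn [pval]. rewrite greedy_rem_S.
  assert (q ^ k <> 0) by (apply pow_nonzero; lra).
  replace (1 - (pval q greedy_digit k + INR (greedy_digit k) / q ^ S k))
    with ((1 - pval q greedy_digit k) - INR (greedy_digit k) / q ^ S k) by ring.
  rewrite IH. simpl. field. lra.
Qed.

Lemma greedy_tail k : 1 - pval q greedy_digit k <= / q ^ k.
Proof.
  rewrite greedy_remainder. pose proof (pow_lt q k ltac:(lra)).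
  pose proof (greedy_rem_le_1 k).
  unfold Rdiv. rewrite <- (Rmult_1_l (/ q ^ k)) at 2.
  apply Rmult_le_compat_r; [left; apply Rinv_0_lt_compat|]; lra.
Qed.

Lemma greedy_expansion : expansion_of_one q greedy_digit.
Proof.
  apply expansion_of_one_pval. intros eps Heps.
  destruct (inv_pow_eventually_lt q eps ltac:(lra) Heps) as [N HN].
  exists N. intros n Hn. unfold R_dist. specialize (HN n Hn).
  pose proof (greedy_tail n). pose proof (greedy_remainder n).
  pose proof (greedy_rem_pos n). pose proof (pow_lt q n ltac:(lra)).
  assert (0 < greedy_rem n / q ^ n) by (apply Rdiv_lt_0_compat; lra).
  rewrite Rabs_minus_sym, Rabs_right; lra.
Qed.

Lemma greedy_not_ending_zero : not_ending_zero greedy_digit.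
Proof.
  intros n. apply NNPP. intros Hzero.
  assert (Hrem : forall j, greedy_rem (j + n) = q ^ j * greedy_rem n).
  { induction j as [|j IH]; [simpl; ring|].
    replace (S j + n)%nat with (S (j + n)) by lia. rewrite greedy_rem_S, IH.
    replace (greedy_digit (j + n)) with 0%nat; [simpl; ring|].
    apply NNPP. intros Hne. apply Hzero. exists (j + n)%nat. split; [lia | auto]. }
  pose proof (greedy_rem_pos n) as Hpos.
  destruct (inv_pow_eventually_lt q _ ltac:(lra) Hpos) as [N HN].
  specialize (HN N (le_n N)).
  pose proof (greedy_rem_le_1 (N + n)) as Hle. rewrite Hrem in Hle.
  pose proof (pow_lt q N ltac:(lra)).
  apply (Rmult_lt_compat_l (q ^ N)) in HN; [|lra].
  rewrite Rinv_r in HN; lra.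
Qed.

Lemma greedy_maximal c :
  not_ending_zero c -> expansion_of_one q c -> lex_le c greedy_digit.
Proof.
  intros Hnz Hc. destruct (lex_le_or_gt c greedy_digit) as [Hle | [k [Hk Hlt]]]; [exact Hle|].
  exfalso.
  pose proof (one_le_pval_of_lex_above q greedy_digit c k ltac:(lra) (greedy_tail (S k))
                (fun i Hi => eq_sym (Hk i Hi)) Hlt).
  pose proof (pval_lt_one q c (S k) ltac:(lra) Hnz Hc). lra.
Qed.

Lemma greedy_quasi_greedy : is_quasi_greedy M q greedy_digit.
Proof.
  split; [intro i; apply max_below_le|].
  split; [exact greedy_not_ending_zero|].
  split; [exact greedy_expansion|].
  intros c _. apply greedy_maximal.
Qed.

End Greedy.

Lemma alpha_quasi_greedy M q : 1 < q <= INR M + 1 -> is_quasi_greedy M q (alpha M q).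
Proof.
  intros Hq. unfold alpha. apply epsilon_spec.
  exists (greedy_digit M q). now apply greedy_quasi_greedy.
Qed.

Lemma alpha_tail M q k : 1 < q <= INR M + 1 -> 1 - pval q (alpha M q) k <= / q ^ k.
Proof.
  intros Hq.
  rewrite (pval_ext q (alpha M q) (greedy_digit M q)); [now apply greedy_tail|].
  destruct (alpha_quasi_greedy M q Hq) as [Ha [Hanz [Haexp Hamax]]].
  destruct (greedy_quasi_greedy M q Hq) as [Hg [Hgnz [Hgexp Hgmax]]].
  intros i _. apply lex_le_antisym; auto.
Qed.

Lemma alpha_prefix_eq M p q N :
  1 < p -> p <= q -> q <= INR M + 1 -> pval p (alpha M q) N < 1 ->
  agree_below N (alpha M p) (alpha M q).
Proof.
  intros Hp Hpq Hq HN.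
  destruct (alpha_quasi_greedy M p ltac:(lra)) as [_ [Hpnz [Hpexp _]]].
  intros i. induction i as [i IH] using lt_wf_ind. intros Hi.
  assert (Hbelow : agree_below i (alpha M p) (alpha M q)) by (intros j Hj; apply IH; lia).
  destruct (Nat.lt_trichotomy (alpha M p i) (alpha M q i)) as [Hlt | [Heq | Hgt]];
    [exfalso | exact Heq | exfalso].
  - pose proof (one_le_pval_of_lex_above p (alpha M p) (alpha M q) i ltac:(lra)
                  (alpha_tail M p (S i) ltac:(lra)) (fun j Hj => eq_sym (Hbelow j Hj)) Hlt).
    pose proof (pval_le_mono p (alpha M q) (S i) N ltac:(lra) Hi). lra.
  - pose proof (one_le_pval_of_lex_above q (alpha M q) (alpha M p) i ltac:(lra)
                  (alpha_tail M q (S i) ltac:(lra)) Hbelow Hgt).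
    pose proof (pval_base_antimono p q (alpha M p) (S i) ltac:(lra)).
    pose proof (pval_lt_one p (alpha M p) (S i) ltac:(lra) Hpnz Hpexp). lra.
Qed.

Lemma alpha_prefix_eventually_eq M q (p : nat -> R) N :
  1 < q <= INR M + 1 -> (forall n, 1 < p n) -> Un_growing p -> Un_cv p q ->
  exists n0, forall n, (n0 <= n)%nat -> agree_below N (alpha M (p n)) (alpha M q).
Proof.
  intros Hq Hp Hgrow Hcv.
  destruct (alpha_quasi_greedy M q Hq) as [_ [Hnz [Hexp _]]].
  pose proof (pval_lt_one q (alpha M q) N ltac:(lra) Hnz Hexp) as HN.
  destruct (continuity_seq _ p q (pval_continuous (alpha M q) N q ltac:(lra)) Hcv
              (1 - pval q (alpha M q) N) ltac:(lra)) as [n0 Hn0].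
  exists n0. intros n Hn.
  specialize (Hn0 n Hn). unfold R_dist in Hn0. apply Rabs_def2 in Hn0.
  apply alpha_prefix_eq; [apply Hp | apply (growing_ineq p q Hgrow Hcv) | lra | lra].
Qed.

(* [Vq M q x] is [digit_seq M x /\ shifts_bounded M (alpha M q) x] and
   [Vset M a] is [digit_seq M a /\ shifts_bounded M a a], by conversion. *)
Definition shifts_bounded (M : nat) (a x : nat -> nat) : Prop :=
  forall n, lex_le (refl M a) (shift n x) /\ lex_le (shift n x) a.

Lemma lex_le_refl_rev M x y : digit_seq M y -> lex_le x y -> lex_le (refl M y) (refl M x).
Proof.
  unfold refl. intros Hy [Heq | [n [Hn Hlt]]].
  - left. intros i. now rewrite Heq.
  - right. exists n. split; [intros i Hi; now rewrite Hn|]. specialize (Hy n). lia.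
Qed.

Lemma refl_involutive M x : digit_seq M x -> refl M (refl M x) = x.
Proof. intros Hx. apply functional_extensionality. intros i. unfold refl. specialize (Hx i). lia. Qed.

Lemma shifts_bounded_refl M a x :
  digit_seq M a -> digit_seq M x -> shifts_bounded M a x -> shifts_bounded M a (refl M x).
Proof.
  intros Ha Hx Hbound n. destruct (Hbound n) as [Hlo Hhi].
  change (shift n (refl M x)) with (refl M (shift n x)).
  split; [now apply lex_le_refl_rev|].
  rewrite <- (refl_involutive M a Ha).
  apply lex_le_refl_rev; [intros i; apply Hx | exact Hlo].
Qed.

Lemma shift_shift k n x : shift n (shift k x) = shift (k + n) x.
Proof. apply functional_extensionality. intros i. unfold shift. f_equal. lia. Qed.

Lemma shifts_bounded_shift M a x k : shifts_bounded M a x -> shifts_bounded M a (shift k x).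
Proof. intros Hbound n. rewrite shift_shift. apply Hbound. Qed.

Lemma lex_lt_of_mismatch L u v u' v' :
  lex_le u v -> ~ agree_below L u v -> agree_below L u' u -> agree_below L v' v ->
  lex_lt u' v'.
Proof.
  intros [Heq | [t [Ht Hlt]]] Hmis Hu Hv; [now elim Hmis; intros i _|].
  destruct (Nat.lt_ge_cases t L) as [HtL | HLt].
  - exists t. rewrite Hu, Hv by exact HtL. split; [|exact Hlt].
    intros i Hi. rewrite Hu, Hv by lia. auto.
  - elim Hmis. intros i Hi. apply Ht. lia.
Qed.

Definition tail_matches (M : nat) (a x : nat -> nat) (N j : nat) : Prop :=
  agree_below (N - j) (shift j x) a \/ agree_below (N - j) (shift j x) (refl M a).

Lemma shift_bounded_of_tail_mismatch M a b x z N n :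
  shifts_bounded M a x -> agree_below N b a -> agree_below N z x ->
  ~ tail_matches M a x N n ->
  lex_le (refl M b) (shift n z) /\ lex_le (shift n z) b.
Proof.
  intros Hx Hba Hzx Hmis. destruct (Hx n) as [Hlo Hhi].
  assert (Hz : agree_below (N - n) (shift n z) (shift n x))
    by (intros i Hi; apply Hzx; lia).
  assert (Hb : agree_below (N - n) b a) by (intros i Hi; apply Hba; lia).
  split; right.
  - apply (lex_lt_of_mismatch (N - n) (refl M a) (shift n x)); [exact Hlo | | | exact Hz].
    + intros Hagree. apply Hmis. right. intros i Hi. symmetry. auto.
    + intros i Hi. unfold refl. now rewrite Hb.
  - apply (lex_lt_of_mismatch (N - n) (shift n x) a); [exact Hhi | | exact Hz | exact Hb].
    intros Hagree. apply Hmis. now left.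
Qed.

Definition splice (j : nat) (x c : nat -> nat) : nat -> nat :=
  fun i => if (i <? j)%nat then x i else c (i - j)%nat.

Lemma shift_splice j x c n : (j <= n)%nat -> shift n (splice j x c) = shift (n - j) c.
Proof.
  intros Hjn. apply functional_extensionality. intros i. unfold shift, splice.
  destruct (Nat.ltb_spec (n + i) j); [lia|]. f_equal. lia.
Qed.

Lemma splice_agree j x c N :
  agree_below (N - j) (shift j x) c -> agree_below N (splice j x c) x.
Proof.
  intros Hc i Hi. unfold splice. destruct (Nat.ltb_spec i j); [reflexivity|].
  rewrite <- Hc by lia. unfold shift. f_equal. lia.
Qed.

Lemma prefix_extends_to_bounded M a b x N :
  digit_seq M b -> shifts_bounded M b b -> agree_below N b a ->
  digit_seq M x -> shifts_bounded M a x ->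
  exists z, digit_seq M z /\ shifts_bounded M b z /\ agree_below N z x.
Proof.
  intros Hb Hbb Hba Hx Hxa.
  destruct (exists_least (tail_matches M a x N))
    as [j [Hj Hleast]]; [exists N; left; intros i Hi; lia|].
  assert (Hc : exists c, digit_seq M c /\ shifts_bounded M b c
                         /\ agree_below (N - j) (shift j x) c).
  { destruct Hj as [Ha | Hra]; [exists b | exists (refl M b)].
    - split; [exact Hb|]. split; [exact Hbb|]. intros i Hi. rewrite Hba; auto. lia.
    - split; [intros i; unfold refl; lia|]. split; [now apply shifts_bounded_refl|].
      intros i Hi. rewrite Hra by exact Hi. unfold refl. rewrite Hba; [reflexivity | lia]. }
  destruct Hc as [c [Hcdig [Hcb Hxc]]].
  pose proof (splice_agree j x c N Hxc) as Hzx.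
  exists (splice j x c). split; [|split; [|exact Hzx]].
  - intros i. unfold splice. destruct (i <? j)%nat; auto.
  - intros n. destruct (Nat.lt_ge_cases n j) as [Hnj | Hjn].
    + apply (shift_bounded_of_tail_mismatch M a b x _ N n Hxa Hba Hzx).
      intros Hn. specialize (Hleast n Hn). lia.
    + rewrite shift_splice by exact Hjn. apply Hcb.
Qed.

Theorem lemma3p4 (M : nat) (qKL q : R) (w : list nat) (p : nat -> R) :
  (1 <= M)%nat ->
  1 < qKL <= INR M + 1 ->
  (forall i, alpha M qKL i = lambdaKL M i) ->
  qKL < q <= INR M + 1 ->
  (exists y, Vq M q y /\ occurs_in w y) ->
  (forall n, 1 < p n <= INR M + 1) ->
  (forall n, p n < p (S n)) ->
  Un_cv p q ->
  (forall n, Vset M (alpha M (p n))) ->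
  exists n0, forall n, (n0 <= n)%nat -> exists y, Vq M (p n) y /\ occurs_in w y.
Proof.
  (* [qKL] only serves to give [1 < q]. *)
  intros _ HKL _ Hq [y [[Hy Hya] [k Hk]]] Hp Hinc Hcv HV.
  destruct (alpha_prefix_eventually_eq M q p (length w) ltac:(lra) (fun n => proj1 (Hp n))
              (fun n => Rlt_le _ _ (Hinc n)) Hcv) as [n0 Hn0].
  exists n0. intros n Hn. destruct (HV n) as [Hb Hbb].
  destruct (prefix_extends_to_bounded M (alpha M q) (alpha M (p n)) (shift k y) (length w)
              Hb Hbb (Hn0 n Hn) (fun i => Hy (k + i)%nat) (shifts_bounded_shift _ _ _ k Hya))
    as [z [Hz [Hzb Hzy]]].
  exists z. split; [now split|].
  exists 0%nat. intros i Hi. rewrite Hzy by exact Hi. apply Hk, Hi.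
Qed.
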